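(* Let $D$ be a chain BN on $\{0,1\}^n$ with all conditional probabilities in $(0,1)$, and let $f(x)=\prod_{i\in T_1}x_i\prod_{j\in T_0}(1-x_j)$ where $T_0,T_1\subseteq[n]$ are disjoint and $T=T_0\cup T_1$ has $d\ge1$ elements. Let $S\subseteq[n]$ and write $0=t_0<t_1<\dots<t_d$ for the elements of $T\cup\{0\}$. If $\max S>t_d$ then $\hat f_S=0$. Otherwise, with $A_i,D'_{r,a},A'_{r,a}$ defined (relative to $S,T_0,T_1$) as in the context, and with $h_i=\min(S\cap(t_{i-1},t_i))$ if $S\cap(t_{i-1},t_i)\neq\emptyset$ and $h_i=t_i$ otherwise ($i=1,\dots,d$), $y_0=0$ and $y_i=1$ if $t_i\in T_1$, $y_i=0$ if $t_i\in T_0$, $$\hat f_S=\prod_{i=1}^d D'_{h_i+1,\,t_i}\;A'_{t_{i-1}+1,\,h_i}(y_{i-1}).$$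
   Context: A chain BN on $X_1,\dots,X_n$ is a Bayesian network with $\operatorname{pa}(1)=\emptyset$ and $\operatorname{pa}(i)=\{i-1\}$ for $2\le i\le n$. For $b\in\{0,1\}$ write $\mu_{i,b}=P(X_i=1\mid X_{i-1}=b)$ and $\sigma_{i,b}=\sqrt{\mu_{i,b}(1-\mu_{i,b})}$ for $i\ge2$, and set $\mu_{1,0}=\mu_{1,1}=P(X_1=1)$, $\sigma_{1,0}=\sigma_{1,1}=\sqrt{\mu_{1,0}(1-\mu_{1,0})}$. The BN-induced basis is $\phi_i(x)=(x_i-\mu_{i,x_{i-1}})/\sigma_{i,x_{i-1}}$ (for $i=1$, $(x_1-\mu_{1,0})/\sigma_{1,0}$), $\phi_S=\prod_{i\in S}\phi_i$, and $\hat f_S=\mathbb{E}_D[f(X)\phi_S(X)]$. Given $S,T_0,T_1$ with $T=T_0\cup T_1$, for $i\in[n]$ and $b\in\{0,1\}$ define $A_i(b)=\mu_{i,b}$ if $i\in T_1\setminus S$ or $i\notin S\cup T$; $A_i(b)=1-\mu_{i,b}$ if $i\in T_0\setminus S$; $A_i(b)=\sigma_{i,b}$ if $i\in S\cap T_1$ or $i\in S\setminus T$; $A_i(b)=-\sigma_{i,b}$ if $i\in S\cap T_0$. Let $D_i=A_i(1)-A_i(0)$. For integers $r,a$ let $D'_{r,a}=\prod_{\ell=r}^{a}D_\ell$ (equal to $1$ if $r>a$), $A'_{r,a}(0)=\sum_{\ell=r}^{a}D'_{\ell+1,a}A_\ell(0)$ (equal to $0$ if $r>a$), and $A'_{r,a}(1)=A'_{r,a}(0)+D'_{r,a}$.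 *)

From HB Require Import structures.
From mathcomp Require Import all_boot all_order all_algebra.
From mathcomp Require Import reals.
Set Implicit Arguments. Unset Strict Implicit. Unset Printing Implicit Defensive.
Import Order.TTheory GRing.Theory Num.Theory.
Local Open Scope ring_scope.

(* Variables are indexed 1..n.  A point x of {0,1}^n is an n.-tuple bool;
   x_i (1 <= i <= n) is [xv x i]; by convention x_0 = false (only used as
   the "parent" of X_1, whose conditional probability does not depend on it). *)
Definition xv (n : nat) (x : n.-tuple bool) (i : nat) : bool :=
  if i is k.+1 then nth false x k else false.

Section ChainBN.
Variable R : realType.
Variable n : nat.
(* mu i b = P(X_i = 1 | X_{i-1} = b) for i >= 2; mu 1 b = P(X_1 = 1). *)
Variable mu : nat -> bool -> R.

Definition sigma (i : nat) (b : bool) : R := Num.sqrt (mu i b * (1 - mu i b)).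

Definition chainD (x : n.-tuple bool) : R :=
  \prod_(1 <= i < n.+1)
     (if xv x i then mu i (xv x i.-1) else 1 - mu i (xv x i.-1)).

Definition phi (i : nat) (x : n.-tuple bool) : R :=
  (((xv x i)%:R - mu i (xv x i.-1)) / sigma i (xv x i.-1)).

Definition phiS (S : pred nat) (x : n.-tuple bool) : R :=
  \prod_(1 <= i < n.+1 | S i) phi i x.

Definition fourier (f : n.-tuple bool -> R) (S : pred nat) : R :=
  \sum_(x : n.-tuple bool) chainD x * (f x * phiS S x).

Definition conjf (T0 T1 : pred nat) (x : n.-tuple bool) : R :=
  (\prod_(1 <= i < n.+1 | T1 i) (xv x i)%:R) *
  (\prod_(1 <= j < n.+1 | T0 j) (1 - (xv x j)%:R)).

Variables S T0 T1 : pred nat.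

Definition Acoef (i : nat) (b : bool) : R :=
  if S i then (if T0 i then - sigma i b else sigma i b)
  else (if T0 i then 1 - mu i b else mu i b).

Definition Dcoef (i : nat) : R := Acoef i true - Acoef i false.

Definition Dp (r a : nat) : R := \prod_(r <= l < a.+1) Dcoef l.

Definition Ap (r a : nat) (b : bool) : R :=
  let a0 := \sum_(r <= l < a.+1) Dp l.+1 a * Acoef l false in
  if b then a0 + Dp r a else a0.

End ChainBN.

Definition Tlist (n : nat) (T0 T1 : pred nat) : seq nat :=
  [seq k <- iota 1 n | T0 k || T1 k].

Definition tpt (n : nat) (T0 T1 : pred nat) (i : nat) : nat :=
  nth 0 (0 :: Tlist n T0 T1) i.

Definition hpt (n : nat) (S T0 T1 : pred nat) (i : nat) : nat :=
  let lo := tpt n T0 T1 i.-1 in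
  let hi := tpt n T0 T1 i in
  head hi [seq k <- iota lo.+1 (hi - lo.+1) | S k].

Definition ypt (n : nat) (T0 T1 : pred nat) (i : nat) : bool :=
  if i is 0 then false else T1 (tpt n T0 T1 i).

(* Write [fourier mu (conjf T0 T1) S] as a sum over x of a product of factors,
   the j-th depending only on (x_{j-1}, x_j), and sum out x_n, x_{n-1}, ... .
   This gives backward quantities w_j(b) = [tail_sum j b], the contribution of
   the coordinates j..n given x_{j-1} = b.  At a coordinate of T the value of x_j
   is forced by f, so w_j(b) = A_j(b) w_{j+1}(y); at any other coordinate w_j(b)
   is affine in A_j(b), with slope w_{j+1}(1) - w_{j+1}(0), and for j in S the
   constant term vanishes.  Hence the slopes propagate multiplicatively by D_j,
   and between two consecutive points t_{i-1} < t_i of T one collects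
   D'_{h_i+1,t_i} A'_{t_{i-1}+1,h_i}(b), h_i being the first coordinate of S in
   the gap.  Beyond t_d the w_j do not depend on b: they vanish from a coordinate
   of S downwards, and equal 1 if there is none. *)
From HB Require Import structures.
From mathcomp Require Import all_boot all_order all_algebra.
From mathcomp Require Import reals.
From mathcomp Require Import ring zify.
Set Implicit Arguments. Unset Strict Implicit. Unset Printing Implicit Defensive.
Import Order.TTheory GRing.Theory Num.Theory.
Local Open Scope ring_scope.

Lemma big_tuple_cons (R : nmodType) k (F : k.+1.-tuple bool -> R) :
  \sum_(x : k.+1.-tuple bool) F x =
  \sum_(c : bool) \sum_(x : k.-tuple bool) F [tuple of c :: x].
Proof.
rewrite pair_big /=.
rewrite (reindex (fun p : bool * k.-tuple bool => [tuple of p.1 :: p.2])) //=.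
exists (fun x : k.+1.-tuple bool => (thead x, [tuple of behead x])).
  by case=> c x _ /=; congr pair; apply: val_inj.
by move=> x _; rewrite [in RHS](tuple_eta x).
Qed.

Lemma nat_down_ind (P : nat -> Prop) a b : P b ->
  (forall j, (a <= j < b)%N -> P j.+1 -> P j) ->
  forall j, (a <= j <= b)%N -> P j.
Proof.
move=> Pb IH j /andP[aj jb]; move: {2}(b - j)%N (erefl (b - j)%N) => k.
elim: k j aj jb => [|k IHk] j aj jb Ek; first by have -> : j = b by lia.
by apply: IH; [lia | apply: IHk; lia].
Qed.

Lemma head_filter_iota (P : pred nat) m k :
  let j := head (m + k)%N [seq i <- iota m k | P i] in
  [/\ (m <= j <= m + k)%N, forall i, (m <= i < j)%N -> ~~ P i
    & (j < m + k)%N -> P j].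
Proof.
elim: k m => [|k IH] m /=; first by rewrite addn0 leqnn; split=> // i; lia.
case Pm: (P m) => /=; first by split=> // [|i]; lia.
rewrite -addSnnS; have [jm jP jS] := IH m.+1; split=> // [|i im]; first lia.
by have [->|ne] := eqVneq i m; [rewrite Pm | apply: jP; lia].
Qed.

Section TransferSum.
Variable R : pzSemiRingType.
Variable g : nat -> bool -> bool -> R.

Fixpoint transfer_sum (m k : nat) (b : bool) : R :=
  if k is k'.+1 then \sum_(c : bool) g m b c * transfer_sum m.+1 k' c else 1.

Lemma sum_tuple_chain_prod k m b :
  \sum_(x : k.-tuple bool)
     \prod_(i < k) g (m + i) (nth false (b :: x) i) (nth false x i)
  = transfer_sum m k b.
Proof.
elim: k m b => [|k IH] m b /=.
  by under eq_bigr do rewrite big_ord0; rewrite sumr_const card_tuple expn0.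
rewrite big_tuple_cons; apply: eq_bigr => c _.
rewrite -(IH m.+1 c) mulr_sumr; apply: eq_bigr => x _.
rewrite big_ord_recl /= addn0; congr (_ * _).
by apply: eq_bigr => i _; rewrite /bump /= add1n addSnnS.
Qed.

End TransferSum.

Section Breakpoints.
Variables (n : nat) (S T0 T1 : pred nat).
Hypothesis T0_range : forall k, T0 k -> (1 <= k <= n)%N.
Hypothesis T1_range : forall k, T1 k -> (1 <= k <= n)%N.

Local Notation L := (Tlist n T0 T1).
Local Notation t := (tpt n T0 T1).

Lemma mem_Tlist k : (k \in L) = ((1 <= k <= n)%N && (T0 k || T1 k)).
Proof. by rewrite /Tlist mem_filter mem_iota add1n andbC. Qed.

Lemma sorted_Tlist : sorted ltn (0%N :: L).
Proof.
rewrite /= path_sortedE; last exact: ltn_trans.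
apply/andP; split; first by apply/allP => k; rewrite mem_Tlist => /andP[/andP[]].
exact/sorted_filter/iota_ltn_sorted/ltn_trans.
Qed.

Lemma tpt_lt a b : (a < b <= size L)%N -> (t a < t b)%N.
Proof.
move=> /andP[ab bL]; apply: (sorted_ltn_nth ltn_trans 0%N sorted_Tlist) => //=;
  rewrite inE /=; lia.
Qed.

Lemma tpt_le a b : (a <= b <= size L)%N -> (t a <= t b)%N.
Proof.
case/andP; rewrite leq_eqVlt => /orP[/eqP-> //|ab bL].
by apply/ltnW/tpt_lt; rewrite ab.
Qed.

Lemma tpt_in i : (1 <= i <= size L)%N -> t i \in L.
Proof. by case: i => // i /= iL; apply: mem_nth. Qed.

Lemma tpt_size_le : (t (size L) <= n)%N.
Proof.
case: (posnP (size L)) => [-> //|L0].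
have := @tpt_in (size L); rewrite L0 leqnn => /(_ isT).
by rewrite mem_Tlist => /andP[/andP[]].
Qed.

Lemma tpt_index k : T0 k || T1 k -> exists2 m, (1 <= m <= size L)%N & t m = k.
Proof.
move=> Tk; have kL : k \in L.
  by rewrite mem_Tlist Tk andbT; case/orP: Tk => [/T0_range|/T1_range].
by exists (index k L).+1; rewrite ?index_mem // /tpt /= nth_index.
Qed.

Lemma notT_between i k : (1 <= i <= size L)%N -> (t i.-1 < k < t i)%N ->
  ~~ (T0 k || T1 k).
Proof.
move=> iL ik; apply/negP => /tpt_index [m mL tm].
have [mi|im] := ltnP m i; first by have := @tpt_le m i.-1; rewrite tm; lia.
by have := @tpt_le i m; rewrite tm; lia.
Qed.

Lemma notT_after k : (t (size L) < k)%N -> ~~ (T0 k || T1 k).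
Proof.
move=> Lk; apply/negP => /tpt_index [m mL tm].
by have := @tpt_le m (size L); rewrite tm; lia.
Qed.

Lemma hpt_spec i : (1 <= i <= size L)%N ->
  let h := hpt n S T0 T1 i in
  [/\ (t i.-1 < h <= t i)%N, forall k, (t i.-1 < k < h)%N -> ~~ S k
    & (h < t i)%N -> S h].
Proof.
move=> iL /=; rewrite /hpt; set lo := t i.-1; set hi := t i.
have E : hi = (lo.+1 + (hi - lo.+1))%N by have := @tpt_lt i.-1 i; lia.
by case: (head_filter_iota S lo.+1 (hi - lo.+1)); rewrite -E.
Qed.

End Breakpoints.

Section ChainFourier.
Variables (R : realType) (n : nat) (mu : nat -> bool -> R) (S T0 T1 : pred nat).

Local Notation A := (Acoef mu S T0).
Local Notation D := (Dcoef mu S T0).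
Local Notation Dp := (Dp mu S T0).
Local Notation Ap := (Ap mu S T0).

Lemma Dp_cons r a : (r <= a)%N -> Dp r a = D r * Dp r.+1 a.
Proof. by move=> ra; rewrite /Dp big_ltn. Qed.

Lemma Dp_nil a : Dp a.+1 a = 1.
Proof. by rewrite /Dp big_geq. Qed.

Lemma Ap_cons r a b : (r <= a)%N -> Ap r a b = Ap r.+1 a false + Dp r.+1 a * A r b.
Proof.
by move=> ra; rewrite /Ap big_ltn // (Dp_cons ra); case: b => //=; rewrite /Dcoef; ring.
Qed.

Lemma Ap_nil a : Ap a.+1 a false = 0.
Proof. by rewrite /Ap big_geq. Qed.

Lemma Ap_true_sub_false r a : Ap r a true - Ap r a false = Dp r a.
Proof. by rewrite /Ap /=; ring. Qed.

Definition fourier_factor (j : nat) (b c : bool) : R :=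
  (if c then mu j b else 1 - mu j b) *
  (((if T1 j then c%:R else 1) * (if T0 j then 1 - c%:R else 1)) *
   (if S j then (c%:R - mu j b) / sigma mu j b else 1)).

Lemma fourier_transfer_sum :
  fourier mu (@conjf R n T0 T1) S = transfer_sum fourier_factor 1 n false.
Proof.
rewrite /fourier -sum_tuple_chain_prod; apply: eq_bigr => x _.
transitivity (\prod_(1 <= i < n.+1) fourier_factor i (xv x i.-1) (xv x i)).
  rewrite /fourier_factor !big_split /= /chainD /conjf /phiS.
  by rewrite (big_mkcond T1) (big_mkcond T0) (big_mkcond S).
rewrite big_add1 /= big_mkord; apply: eq_bigr => i _.
by rewrite add1n; case: (nat_of_ord i).
Qed.

Definition tail_sum (j : nat) (b : bool) : R :=
  transfer_sum fourier_factor j (n.+1 - j) b.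

Lemma tail_sum_end b : tail_sum n.+1 b = 1.
Proof. by rewrite /tail_sum subnn. Qed.

Lemma tail_sum_rec j b : (j <= n)%N ->
  tail_sum j b = \sum_(c : bool) fourier_factor j b c * tail_sum j.+1 c.
Proof. by move=> jn; rewrite /tail_sum subSn //= subSS. Qed.

Hypothesis mu_range : forall i b, (1 <= i <= n)%N -> 0 < mu i b < 1.
Hypothesis T01_disjoint : forall k, ~~ (T0 k && T1 k).

Lemma sigma_var_div j b : (1 <= j <= n)%N ->
  sigma mu j b = mu j b * (1 - mu j b) / sigma mu j b.
Proof.
move=> jn; have /andP[mu0 mu1] := mu_range b jn.
have var0 : 0 < mu j b * (1 - mu j b) by rewrite mulr_gt0 // subr_gt0.
have sigma0 : sigma mu j b != 0 by rewrite gt_eqF // sqrtr_gt0.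
by rewrite -[in mu j b * _](sqr_sqrtr (ltW var0)) expr2 mulfK.
Qed.

Lemma sum_fourier_factor j b (v : bool -> R) : (1 <= j <= n)%N ->
  \sum_(c : bool) fourier_factor j b c * v c =
  if T1 j then A j b * v true
  else if T0 j then A j b * v false
  else if S j then A j b * (v true - v false)
  else v false + A j b * (v true - v false).
Proof.
move=> jn; rewrite big_bool /fourier_factor /Acoef /=.
have := sigma_var_div b jn; move: (sigma mu j b) (mu j b) => s m.
have := T01_disjoint j.
by case: (T1 j); case: (T0 j); case: (S j) => //= _; move: s^-1 => u sE; rewrite ?sE; ring.
Qed.

Lemma tail_sum_T j b : (1 <= j <= n)%N -> T0 j || T1 j ->
  tail_sum j b = A j b * tail_sum j.+1 (T1 j).
Proof.
move=> jn Tj; rewrite tail_sum_rec ?sum_fourier_factor //; last by case/andP: jn.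
by move: Tj (T01_disjoint j); case: (T1 j); case: (T0 j).
Qed.

Lemma tail_sum_S j b : (1 <= j <= n)%N -> ~~ (T0 j || T1 j) -> S j ->
  tail_sum j b = A j b * (tail_sum j.+1 true - tail_sum j.+1 false).
Proof.
move=> jn Tj Sj; rewrite tail_sum_rec ?sum_fourier_factor //; last by case/andP: jn.
by move: Tj Sj; case: (T1 j); case: (T0 j); case: (S j).
Qed.

Lemma tail_sum_notS j b : (1 <= j <= n)%N -> ~~ (T0 j || T1 j) -> ~~ S j ->
  tail_sum j b = tail_sum j.+1 false
                 + A j b * (tail_sum j.+1 true - tail_sum j.+1 false).
Proof.
move=> jn Tj Sj; rewrite tail_sum_rec ?sum_fourier_factor //; last by case/andP: jn.
by move: Tj Sj; case: (T1 j); case: (T0 j); case: (S j).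
Qed.

Lemma tail_sum_diff_T j : (1 <= j <= n)%N -> T0 j || T1 j ->
  tail_sum j true - tail_sum j false = D j * tail_sum j.+1 (T1 j).
Proof. by move=> jn Tj; rewrite !(tail_sum_T _ jn Tj) /Dcoef; ring. Qed.

Lemma tail_sum_diff_notT j : (1 <= j <= n)%N -> ~~ (T0 j || T1 j) ->
  tail_sum j true - tail_sum j false
  = D j * (tail_sum j.+1 true - tail_sum j.+1 false).
Proof.
move=> jn Tj; case Sj: (S j); first by rewrite !(tail_sum_S _ jn Tj Sj) /Dcoef; ring.
by rewrite !(tail_sum_notS _ jn Tj) ?Sj // /Dcoef; ring.
Qed.

Lemma tail_sum_segment lo h hi : (lo < h <= hi)%N -> (hi <= n)%N ->
  T0 hi || T1 hi -> (forall k, (lo < k < hi)%N -> ~~ (T0 k || T1 k)) ->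
  (forall k, (lo < k < h)%N -> ~~ S k) -> ((h < hi)%N -> S h) ->
  forall b, tail_sum lo.+1 b = Dp h.+1 hi * Ap lo.+1 h b * tail_sum hi.+1 (T1 hi).
Proof.
move=> /andP[loh hhi] hin Thi notT notS Sh.
set Z := tail_sum hi.+1 (T1 hi).
have slope j : (h.+1 <= j <= hi)%N ->
    tail_sum j true - tail_sum j false = Dp j hi * Z.
  move: j; apply: nat_down_ind => [|j hj IH].
    by rewrite tail_sum_diff_T ?(Dp_cons (leqnn hi)) ?Dp_nil ?mulr1 //; lia.
  by rewrite tail_sum_diff_notT ?IH ?(Dp_cons (r := j)) ?mulrA ?notT //; lia.
have at_h b : tail_sum h b = A h b * (Dp h.+1 hi * Z).
  have [->|ne] := eqVneq h hi; first by rewrite Dp_nil mul1r tail_sum_T //; lia.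
  have h_lt : (h < hi)%N by rewrite ltn_neqAle ne.
  by rewrite tail_sum_S ?Sh ?slope ?notT //; lia.
have below_h j : (lo.+1 <= j <= h)%N -> forall b,
    tail_sum j b = Dp h.+1 hi * Z * Ap j h b.
  move: j; apply: nat_down_ind => [|j hj IH] b.
    by rewrite at_h Ap_cons // Ap_nil Dp_nil add0r mul1r; ring.
  rewrite tail_sum_notS ?notT ?notS ?IH ?(Ap_cons b (r := j)) -?mulrBr ?Ap_true_sub_false;
    try lia; ring.
by move=> b; rewrite below_h /Z; [ring | lia].
Qed.

Hypothesis S_range : forall k, S k -> (1 <= k <= n)%N.
Hypothesis T0_range : forall k, T0 k -> (1 <= k <= n)%N.
Hypothesis T1_range : forall k, T1 k -> (1 <= k <= n)%N.

Section Tail.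
Variable td : nat.
Hypothesis notT_after_td : forall k, (td < k)%N -> ~~ (T0 k || T1 k).

Lemma tail_sum_const j : (td < j <= n.+1)%N -> tail_sum j true = tail_sum j false.
Proof.
move: j; apply: nat_down_ind => [|j tdj IH]; first by rewrite !tail_sum_end.
have jn : (1 <= j <= n)%N by lia.
have Tj : ~~ (T0 j || T1 j) by apply: notT_after_td; lia.
case Sj: (S j); first by rewrite !(tail_sum_S _ jn Tj Sj) IH subrr !mulr0.
by rewrite !(tail_sum_notS _ jn Tj) ?Sj // IH subrr !mulr0.
Qed.

Lemma tail_sum_eq1 j : (td < j <= n.+1)%N -> (forall s, S s -> (s < j)%N) ->
  forall b, tail_sum j b = 1.
Proof.
move: j; apply: nat_down_ind => [_ b|j tdj IH Sj b]; first exact: tail_sum_end.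
rewrite tail_sum_notS ?notT_after_td ?tail_sum_const ?subrr ?mulr0 ?addr0; try lia.
- by apply: IH => s /Sj; lia.
- by apply/negP => /Sj; rewrite ltnn.
Qed.

Lemma tail_sum_eq0 s : S s -> (td < s)%N -> tail_sum 1 false = 0.
Proof.
move=> Ss tds; have sn := S_range Ss.
suff below_s j : (1 <= j <= s)%N -> forall b, tail_sum j b = 0 by apply: below_s; lia.
move: j; apply: nat_down_ind => [|j js IH] b.
  by rewrite tail_sum_S ?notT_after_td ?tail_sum_const ?subrr ?mulr0 //; lia.
by rewrite tail_sum_rec ?big1 // => [c _|]; [rewrite IH mulr0 | lia].
Qed.

End Tail.

Local Notation L := (Tlist n T0 T1).
Local Notation t := (tpt n T0 T1).
Local Notation h := (hpt n S T0 T1).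
Local Notation y := (ypt n T0 T1).
Local Notation fhat := (fourier mu (@conjf R n T0 T1) S).

Lemma tail_sum_prefix k : (k <= size L)%N ->
  tail_sum 1 false =
  \prod_(1 <= i < k.+1) (Dp (h i).+1 (t i) * Ap (t i.-1).+1 (h i) (y i.-1))
  * tail_sum (t k).+1 (y k).
Proof.
elim: k => [|k IH] kL; first by rewrite big_geq // mul1r.
have k1L : (1 <= k.+1 <= size L)%N by [].
have [th notS Sh] := hpt_spec S k1L.
have /[!mem_Tlist] /andP[/andP[_ tn] Tt] := tpt_in k1L.
rewrite big_nat_recr //= IH 1?ltnW // (tail_sum_segment th tn Tt) //.
  by rewrite !mulrA.
by move=> i ti; apply: (notT_between T0_range T1_range k1L).
Qed.

Lemma fourier_tail_sum : fhat = tail_sum 1 false.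
Proof. by rewrite fourier_transfer_sum /tail_sum subSS subn0. Qed.

Lemma fourier_conj_eq0 : (exists s, S s /\ (t (size L) < s)%N) -> fhat = 0.
Proof.
case=> s [Ss ts]; rewrite fourier_tail_sum.
exact: (tail_sum_eq0 (notT_after T0_range T1_range) Ss ts).
Qed.

Lemma fourier_conj_prod : ~ (exists s, S s /\ (t (size L) < s)%N) ->
  fhat = \prod_(1 <= i < (size L).+1)
           (Dp (h i).+1 (t i) * Ap (t i.-1).+1 (h i) (y i.-1)).
Proof.
move=> noS; rewrite fourier_tail_sum (tail_sum_prefix (leqnn _)).
rewrite (tail_sum_eq1 (notT_after T0_range T1_range)) ?mulr1 //.
- by rewrite ltnSn ltnS tpt_size_le.
- by move=> s Ss; rewrite ltnS leqNgt; apply/negP => ts; apply: noS; exists s.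
Qed.

End ChainFourier.

Theorem mainTheorem5 (R : realType) (n : nat) (mu : nat -> bool -> R)
    (S T0 T1 : pred nat) :
  (forall i b, (1 <= i <= n)%N -> 0 < mu i b < 1) ->
  mu 1%N false = mu 1%N true ->
  (forall k, S k -> (1 <= k <= n)%N) ->
  (forall k, T0 k -> (1 <= k <= n)%N) ->
  (forall k, T1 k -> (1 <= k <= n)%N) ->
  (forall k, ~~ (T0 k && T1 k)) ->
  (1 <= size (Tlist n T0 T1))%N ->
  let d := size (Tlist n T0 T1) in
  let t := tpt n T0 T1 in
  let h := hpt n S T0 T1 in
  let y := ypt n T0 T1 in
  let fhat := fourier mu (@conjf R n T0 T1) S in
  ((exists s, S s /\ (t d < s)%N) -> fhat = 0) /\
  (~ (exists s, S s /\ (t d < s)%N) ->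
     fhat = \prod_(1 <= i < d.+1)
              (Dp mu S T0 (h i).+1 (t i) * Ap mu S T0 (t i.-1).+1 (h i) (y i.-1))).
Proof.
move=> mu_range _ S_range T0_range T1_range T01_disjoint _ /=; split.
- exact: fourier_conj_eq0 mu_range T01_disjoint S_range T0_range T1_range.
- exact: fourier_conj_prod mu_range T01_disjoint T0_range T1_range.
Qed.
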